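(* Let $G=(V,E)$ be a finite connected non-bipartite graph such that the signed graph $(G,\sigma_-)$ with the all-negative sign $\sigma_-\equiv-1$ satisfies $CD^{\sigma_-}(0,N)$ for some $N\in(1,\infty]$. Let $\lambda_{|V|}$ be the largest eigenvalue of the graph Laplacian $\Delta$. Then \[ 2-\lambda_{|V|}\geq \frac{1}{4\left(1+\sqrt{(N-1)/N}\right)}\cdot\frac{1}{d(D+1)\lceil (D+1)/2\rceil}, \] where $d$ is the maximal vertex degree, $D$ the diameter of $G$, and $\sqrt{(N-1)/N}:=1$ when $N=\infty$.
   Context: $G$ is a finite simple connected graph with degrees $d_x$. For a sign $\sigma:E\to\{\pm1\}$ ($\sigma_{xy}=\sigma(\{x,y\})$) the signed Laplacian is $\Delta^{\sigma}f(x)=\frac{1}{d_x}\sum_{y\sim x}(\sigma_{xy}f(y)-f(x))$; $\Delta$ is the case $\sigma\equiv+1$, whose eigenvalues ($-\Delta f=\lambda f$) are $0=\lambda_1<\lambda_2\le\dots\le\lambda_{|V|}\le 2$. $\Gamma^{\sigma}(f,g)=\frac12\{\Delta(fg)-g\Delta^{\sigma}f-f\Delta^{\sigma}g\}$, $\Gamma_2^{\sigma}(f,g)=\frac12\{\Delta\Gamma^{\sigma}(f,g)-\Gamma^{\sigma}(g,\Delta^{\sigma}f)-\Gamma^{\sigma}(f,\Delta^{\sigma}g)\}$. $CD^{\sigma}(K,N)$ means $\Gamma_2^{\sigma}(f,f)(x)\ge\frac1N(\Delta^\sigma f)^2(x)+K\Gamma^\sigma(f,f)(x)$ for all $f:V\to\mathbb{R}$,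 $x\in V$ ($\frac1N=0$ if $N=\infty$). $\lceil\cdot\rceil$ is the ceiling. *)

From mathcomp Require Import all_boot all_order all_algebra.
From mathcomp Require Import reals constructive_ereal.
Set Implicit Arguments. Unset Strict Implicit. Unset Printing Implicit Defensive.
Import Order.TTheory GRing.Theory Num.Theory.
Local Open Scope ring_scope.

Section Graph.
Variable T : finType.
Variable e : rel T.

Definition simple_graph : Prop := symmetric e /\ irreflexive e.
Definition connected_graph : Prop := forall x y : T, connect e x y.
Definition bipartite : Prop :=
  exists c : T -> bool, forall x y, e x y -> c x != c y.

Definition deg (x : T) : nat := #|[set y | e x y]|.
Definition max_deg : nat := \max_(x : T) deg x.

Definition ball (x : T) (n : nat) : {set T} :=
  iter n (fun S : {set T} => S :|: [set y | [exists z in S, e z y]]) [set x].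
(* least n with y within n steps of x (equals #|T| if unreachable) *)
Definition dist (x y : T) : nat := find (fun n => y \in ball x n) (iota 0 #|T|).
Definition diameter : nat := \max_(x : T) \max_(y : T) dist x y.

Variable R : realType.

Definition lapS (sigma : T -> T -> R) (f : T -> R) (x : T) : R :=
  (deg x)%:R^-1 * \sum_(y | e x y) (sigma x y * f y - f x).
Definition lap (f : T -> R) : T -> R := lapS (fun _ _ => 1) f.

Definition GammaS (sigma : T -> T -> R) (f g : T -> R) (x : T) : R :=
  2^-1 * (lap (fun z => f z * g z) x - g x * lapS sigma f x - f x * lapS sigma g x).

Definition Gamma2S (sigma : T -> T -> R) (f g : T -> R) (x : T) : R :=
  2^-1 * (lap (GammaS sigma f g) x - GammaS sigma g (lapS sigma f) x
          - GammaS sigma f (lapS sigma g) x).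

Definition invN (N : \bar R) : R := if N is r%:E then r^-1 else 0.

Definition CD (sigma : T -> T -> R) (K : R) (N : \bar R) : Prop :=
  forall (f : T -> R) (x : T),
    Gamma2S sigma f f x >= invN N * (lapS sigma f x) ^+ 2 + K * GammaS sigma f f x.


Definition lap_eigenvalue (lam : R) : Prop :=
  exists f : T -> R, (exists x, f x != 0) /\ forall x, - lap f x = lam * f x.

Definition largest_lap_eigenvalue (lam : R) : Prop :=
  lap_eigenvalue lam /\ forall mu, lap_eigenvalue mu -> mu <= lam.

End Graph.

Definition sigma_neg (T : finType) (R : realType) : T -> T -> R := fun _ _ => -1.

Definition sqrtNratio (R : realType) (N : \bar R) : R :=
  if N is r%:E then Num.sqrt ((r - 1) / r) else 1.

(* Put mu := 2 - lam and s := sqrt((N-1)/N).  Since Delta^{sigma_-} = -Delta - 2, an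
   eigenfunction f of -Delta for lam satisfies Delta^{sigma_-} f = -mu f.  Applying
   CD^{sigma_-}(0,N) at a maximum point of Gamma(f) + (1+s) mu f^2 gives the gradient
   estimate Gamma(f) <= 2 (1+s) mu max f^2.  As 2 d_x Gamma(f)(x) = sum_{y~x} (f y + f x)^2,
   this bounds |f y + f x| on edges and |f u - f w| for two neighbours u, w of a vertex by
   h = sqrt(8 d (1+s) mu max f^2), so along a walk of length k from x0 to y,
   |f y - (-1)^k f x0| <= ceil(k/2) h.  As G is not bipartite, some edge joins two vertices
   whose distances to x0 have the same parity; it closes two walks of lengths of opposite
   parity and total at most 2D+1, whence 2 |f x0| <= (D+1) h.  Choosing x0 with f(x0)^2
   maximal gives 1 <= 2 (1+s) d (D+1)^2 mu, and (D+1)/2 <= ceil((D+1)/2). *)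

From mathcomp Require Import all_boot all_order all_algebra.
From mathcomp Require Import reals constructive_ereal.
From mathcomp Require Import zify ring lra.
Set Implicit Arguments. Unset Strict Implicit. Unset Printing Implicit Defensive.
Import Order.TTheory GRing.Theory Num.Theory.
Local Open Scope ring_scope.

Section Graph.
Variables (T : finType) (e : rel T).

Inductive walk (x : T) : T -> nat -> Prop :=
  | walk0 : walk x x 0
  | walkS y z k : walk x y k -> e y z -> walk x z k.+1.

Lemma walk0_eq x y : walk x y 0 -> y = x.
Proof. by move E0: 0%N => k W; case: W E0. Qed.

Lemma walkS_inv x z k : walk x z k.+1 -> exists2 y, walk x y k & e y z.
Proof.
move Ek: k.+1 => n W; case: W Ek => // y {}z m W' eyz [->].
by exists y.
Qed.

Lemma ballS x n :
  ball e x n.+1 = ball e x n :|: [set y | [exists z in ball e x n, e z y]].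
Proof. by rewrite /ball iterS. Qed.

Lemma walk_ball x y k : walk x y k -> y \in ball e x k.
Proof.
elim=> [|{}y z {}k _ yxk eyz]; first by rewrite /ball set11.
by rewrite ballS in_setU inE; apply/orP; right; apply/existsP; exists y; rewrite yxk.
Qed.

Lemma ball_walk x y n : y \in ball e x n -> exists2 k, (k <= n)%N & walk x y k.
Proof.
elim: n y => [|n IHn] y; first by rewrite in_set1 => /eqP ->; exists 0%N => //; apply: walk0.
rewrite ballS in_setU => /orP[/IHn[k kn W] | ]; first by exists k => //; apply: leqW.
rewrite inE => /exists_inP[z /IHn[k kn W] ezy].
by exists k.+1 => //; apply: walkS ezy.
Qed.

Lemma path_walk x p : path e x p -> walk x (last x p) (size p).
Proof.
elim/last_ind: p => [|p z IHp]; first by move=> _; apply: walk0.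
rewrite rcons_path last_rcons size_rcons => /andP[/IHp W ez].
exact: walkS W ez.
Qed.

Lemma connect_ball x y : connect e x y -> exists2 n, (n < #|T|)%N & y \in ball e x n.
Proof.
case/connectP=> p /shortenP[q eq uq _] ->{y}; exists (size q).
  by have := max_card (mem (x :: q)); rewrite (card_uniqP uq).
exact/walk_ball/path_walk.
Qed.

Lemma dist_le x y n : (n < #|T|)%N -> y \in ball e x n -> (dist e x y <= n)%N.
Proof.
move=> nT yxn; rewrite leqNgt; apply/negP => /(before_find 0%N).
by rewrite nth_iota // add0n yxn.
Qed.

Lemma walk_dist x y : connect e x y -> walk x y (dist e x y).
Proof.
case/connect_ball=> n nT yxn.
have distT := leq_ltn_trans (dist_le nT yxn) nT.
have : y \in ball e x (dist e x y).
  have has_n : has (fun n => y \in ball e x n) (iota 0 #|T|).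
    by apply/hasP; exists n; rewrite ?mem_iota.
  by have := nth_find 0%N has_n; rewrite nth_iota // add0n.
case/ball_walk=> k kd W.
suff -> : dist e x y = k by [].
by apply/eqP; rewrite eqn_leq kd dist_le ?(leq_ltn_trans kd) ?walk_ball.
Qed.

Lemma dist_le_diameter x y : (dist e x y <= diameter e)%N.
Proof. exact: leq_trans (leq_bigmax y) (leq_bigmax (F := fun x => \max_y dist e x y) x). Qed.

Lemma nonbipartite_parity_edge (l : T -> nat) :
  ~ bipartite e -> exists u v, e u v /\ odd (l u) = odd (l v).
Proof.
move=> nbip.
case: (boolP [exists u, exists v, e u v && (odd (l u) == odd (l v))]).
  by case/existsP=> u /existsP[v /andP[euv /eqP luv]]; exists u, v.
move/existsPn=> none; case: nbip; exists (odd \o l) => x y exy.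
by have /existsPn/(_ y) := none x; rewrite exy.
Qed.

Lemma nonbipartite_edge : ~ bipartite e -> exists u v, e u v.
Proof.
move=> nbip; case: (pickP (fun p : T * T => e p.1 p.2)) => [[u v] euv | none].
  by exists u, v.
by case: nbip; exists xpred0 => x y exy; have /= := none (x, y); rewrite exy.
Qed.

Lemma nonbipartite_deg_gt0 x :
  connected_graph e -> ~ bipartite e -> (0 < deg e x)%N.
Proof.
move=> conn /nonbipartite_edge[u [v euv]]; rewrite /deg card_gt0; apply/set0Pn.
case/connectP: (conn x u) => -[_ /= <- | z p /= /andP[exz _] _]; [exists v | exists z];
  by rewrite inE.
Qed.

Lemma deg_le_max_deg x : (deg e x <= max_deg e)%N.
Proof. exact: (leq_bigmax (F := deg e)). Qed.

End Graph.

Section Laplacian.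
Variables (T : finType) (e : rel T) (R : realType).
Implicit Types (f g : T -> R) (sigma : T -> T -> R).
Local Notation sneg := (@sigma_neg T R).

Lemma mul_deg_lapS sigma f x :
  (deg e x)%:R * lapS e sigma f x = \sum_(y | e x y) (sigma x y * f y - f x).
Proof.
rewrite /lapS mulrA; have [d0|dp] := posnP (deg e x); last first.
  by rewrite mulfV ?mul1r ?pnatr_eq0 -?lt0n.
rewrite d0 big_pred0 ?mul0r // => y; apply/negbTE.
by move/eqP: d0; rewrite cards_eq0 => /eqP/setP/(_ y); rewrite !inE => ->.
Qed.

Lemma eq_lapS sigma f g x : (forall y, f y = g y) -> lapS e sigma f x = lapS e sigma g x.
Proof. by move=> fg; rewrite /lapS; congr (_ * _); apply: eq_bigr => y _; rewrite !fg. Qed.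

Lemma lapSZ sigma c f x : lapS e sigma (fun y => c * f y) x = c * lapS e sigma f x.
Proof.
by rewrite /lapS [RHS]mulrCA [in RHS]mulr_sumr; congr (_ * _); apply: eq_bigr => y _; ring.
Qed.

Lemma lapZ c f x : lap e (fun y => c * f y) x = c * lap e f x.
Proof. exact: lapSZ. Qed.

Lemma lapD f g x : lap e (fun y => f y + g y) x = lap e f x + lap e g x.
Proof.
by rewrite /lap /lapS -mulrDr -big_split /=; congr (_ * _); apply: eq_bigr => y _; ring.
Qed.

Lemma lap_le0_at_max g x : (forall y, g y <= g x) -> lap e g x <= 0.
Proof.
move=> gx; rewrite /lap /lapS mulr_ge0_le0 ?invr_ge0 //.
by apply: sumr_le0 => y _; rewrite mul1r subr_le0.
Qed.

Lemma sum_deg_lap g : symmetric e -> \sum_x (deg e x)%:R * lap e g x = 0.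
Proof.
move=> sym; under eq_bigr do rewrite mul_deg_lapS sumrB.
rewrite sumrB (exchange_big_dep xpredT) //=; apply/eqP; rewrite subr_eq0; apply/eqP.
by apply: eq_bigr => y _; under eq_bigl do rewrite sym; apply: eq_bigr => x _; rewrite mul1r.
Qed.

Lemma lap_sqr sigma f x :
  lap e (fun y => f y * f y) x = 2 * GammaS e sigma f f x + 2 * f x * lapS e sigma f x.
Proof. by rewrite /GammaS; field. Qed.

Lemma lapS_neg f x :
  (0 < deg e x)%N -> lapS e sneg f x = - lap e f x - 2 * f x.
Proof.
move=> dx; have dx0 : (deg e x)%:R != 0 :> R by rewrite pnatr_eq0 -lt0n.
apply: (mulfI dx0); rewrite mulrBr mulrN !mul_deg_lapS -sumrN.
have -> : (deg e x)%:R * (2 * f x) = \sum_(y | e x y) 2 * f x.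
  by rewrite sumr_const /deg cardsE mulr_natl.
by rewrite -sumrB; apply: eq_bigr => y _; rewrite /sigma_neg; ring.
Qed.

Lemma mul_deg_Gamma_neg f x :
  2 * (deg e x)%:R * GammaS e sneg f f x = \sum_(y | e x y) (f y + f x) ^+ 2.
Proof.
have -> : 2 * (deg e x)%:R * GammaS e sneg f f x =
    (deg e x)%:R * lap e (fun y => f y * f y) x - 2 * f x * ((deg e x)%:R * lapS e sneg f x).
  by rewrite (lap_sqr sneg); ring.
rewrite /lap !mul_deg_lapS mulr_sumr -sumrB.
by apply: eq_bigr => y _; rewrite /sigma_neg; ring.
Qed.

Lemma Gamma_neg_ge0 f x : (0 < deg e x)%N -> 0 <= GammaS e sneg f f x.
Proof.
move=> dx; rewrite -(pmulr_rge0 _ (_ : 0 < 2 * (deg e x)%:R)) ?mulr_gt0 ?ltr0n //.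
by rewrite mul_deg_Gamma_neg; apply: sumr_ge0 => y _; apply: sqr_ge0.
Qed.

End Laplacian.

Lemma sqrtNratio_gt0 (R : realType) (N : \bar R) : (1 < N)%E -> 0 < sqrtNratio N.
Proof.
case: N => [r||] //=; rewrite ?lte_fin => r1; have r0 : 0 < r by apply: lt_trans r1.
by rewrite sqrtr_gt0 divr_gt0 ?subr_gt0.
Qed.

Lemma sqr_sqrtNratio (R : realType) (N : \bar R) :
  (1 < N)%E -> sqrtNratio N ^+ 2 = 1 - invN N.
Proof.
case: N => [r||] //=; rewrite ?lte_fin => r1; last by rewrite expr1n subr0.
have r0 : 0 < r by apply: lt_trans r1.
by rewrite sqr_sqrtr ?divr_ge0 ?subr_ge0 ?ltW //; field; rewrite gt_eqF.
Qed.

Section Eigenfunction.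
Variables (T : finType) (e : rel T) (R : realType) (sigma : T -> T -> R).
Variables (f : T -> R) (mu : R).
Hypothesis eig_f : forall x, lapS e sigma f x = - mu * f x.

Local Notation Gf := (GammaS e sigma f f).

Lemma Gamma2_eig x : Gamma2S e sigma f f x = 2^-1 * lap e Gf x + mu * Gf x.
Proof.
have Gamma_lapS : GammaS e sigma f (lapS e sigma f) x = - mu * Gf x.
  rewrite /GammaS /lap (eq_lapS _ _ (g := fun y => - mu * (f y * f y)) _); last first.
    by move=> y; rewrite eig_f; ring.
  rewrite lapSZ (eq_lapS _ _ (f := lapS e sigma f) (g := fun y => - mu * f y) _) //.
  by rewrite lapSZ eig_f; ring.
by rewrite /Gamma2S Gamma_lapS; field.
Qed.

Lemma lap_sqr_eig x : lap e (fun y => f y * f y) x = 2 * Gf x - 2 * mu * f x ^+ 2.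
Proof. by rewrite (lap_sqr _ sigma) eig_f; ring. Qed.

Lemma sum_deg_Gamma_eig :
  symmetric e -> \sum_x (deg e x)%:R * Gf x = mu * \sum_x (deg e x)%:R * f x ^+ 2.
Proof.
move=> /(sum_deg_lap (fun y => f y * f y)); under eq_bigr do rewrite lap_sqr_eig.
have -> : \sum_x (deg e x)%:R * (2 * Gf x - 2 * mu * f x ^+ 2) =
    2 * (\sum_x (deg e x)%:R * Gf x - mu * \sum_x (deg e x)%:R * f x ^+ 2).
  by rewrite mulrBr !mulr_sumr -sumrB; apply: eq_bigr => x _; ring.
lra.
Qed.

Lemma Gamma_eig_le N M :
  (1 < N)%E -> CD e sigma 0 N -> 0 < mu -> (forall y, f y ^+ 2 <= M) ->
  forall y, Gf y <= 2 * (1 + sqrtNratio N) * mu * M.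
Proof.
move=> N1 cd mu0 fM y; set s := sqrtNratio N.
have s0 : 0 < s := sqrtNratio_gt0 N1.
pose G z := Gf z + (1 + s) * mu * (f z * f z).
have [x _ Gx] := @arg_maxP _ _ T y xpredT G isT.
have lapGx : lap e G x <= 0 by apply: lap_le0_at_max => z; apply: Gx.
rewrite lapD lapZ lap_sqr_eig in lapGx.
have invNE : invN N = 1 - s ^+ 2 by rewrite sqr_sqrtNratio //; ring.
have cdx := cd f x; rewrite Gamma2_eig eig_f invNE in cdx.
have Gfx : s * mu * Gf x <= s * mu * ((1 + s) * mu * f x ^+ 2) by lra.
rewrite ler_pM2l ?mulr_gt0 // in Gfx.
have smu : 0 <= (1 + s) * mu by rewrite mulr_ge0 ?ltW ?addr_gt0.
have fy : 0 <= (1 + s) * mu * f y ^+ 2 by rewrite mulr_ge0 ?sqr_ge0.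
have fx : (1 + s) * mu * f x ^+ 2 <= (1 + s) * mu * M by rewrite ler_wpM2l.
have /= := Gx y isT; rewrite /G -!expr2; lra.
Qed.

End Eigenfunction.

Section WalkBound.
Variables (T : finType) (e : rel T) (R : realType) (f : T -> R) (h : R).
Hypothesis sym : symmetric e.
Hypothesis edge_le : forall x y, e x y -> `|f y + f x| <= h.
Hypothesis common_neighbour_le : forall x u w, e x u -> e x w -> `|f u - f w| <= h.

Lemma walk_bound x0 y k :
  walk e x0 y k -> `|f y - (-1) ^+ k * f x0| <= (uphalf k)%:R * h.
Proof.
elim/ltn_ind: k y => -[|[|k]] IHk y.
- by move/walk0_eq ->; rewrite expr0 mul1r subrr normr0 mul0r.
- case/walkS_inv=> x /walk0_eq -> ex0y.
  by rewrite expr1 mulN1r opprK mul1r edge_le.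
- case/walkS_inv=> x /walkS_inv[w W ewx] exy.
  have IHw := IHk k (ltnW (ltnSn k.+1)) w W.
  have yw : `|f y - f w| <= h by apply: common_neighbour_le exy _; rewrite sym.
  rewrite !exprS !mulN1r opprK -[uphalf _]/(uphalf k).+1 mulrSr mulrDl mul1r.
  by rewrite -(subrK (f w) (f y)) -addrA addrC (le_trans (ler_normD _ _)) ?lerD.
Qed.

End WalkBound.

Lemma uphalf_parity_le a b n :
  odd a = odd b -> (a <= n)%N -> (b <= n)%N -> (uphalf a.+1 + uphalf b <= n.+1)%N.
Proof.
rewrite uphalf_half /= => ab; move: (odd_double_half a) (odd_double_half b); rewrite ab; lia.
Qed.

Section NonbipartiteBound.
Variables (T : finType) (e : rel T) (R : realType) (f : T -> R) (B : R).
Hypotheses (sym : symmetric e) (conn : connected_graph e) (nbip : ~ bipartite e).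
Hypothesis Gamma_le : forall x, GammaS e (@sigma_neg T R) f f x <= B.

Local Notation dm := ((max_deg e)%:R : R).

Lemma deg_Gamma_neg_le x : 2 * (deg e x)%:R * GammaS e (@sigma_neg T R) f f x <= 2 * dm * B.
Proof.
have dx := nonbipartite_deg_gt0 x conn nbip.
by rewrite -!mulrA ler_pM2l // ler_pM ?ler0n ?Gamma_neg_ge0 // ler_nat deg_le_max_deg.
Qed.

Lemma edge_sqr_le x y : e x y -> (f y + f x) ^+ 2 <= 4 * dm * B.
Proof.
move=> exy; have := deg_Gamma_neg_le x; rewrite mul_deg_Gamma_neg => sumB.
have : (f y + f x) ^+ 2 <= \sum_(z | e x z) (f z + f x) ^+ 2.
  by rewrite (bigD1 y) //= lerDl sumr_ge0 // => z _; apply: sqr_ge0.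
have : 0 <= \sum_(z | e x z) (f z + f x) ^+ 2 by apply: sumr_ge0 => z _; apply: sqr_ge0.
lra.
Qed.

Lemma common_neighbour_sqr_le x u w : e x u -> e x w -> (f u - f w) ^+ 2 <= 4 * dm * B.
Proof.
move=> exu exw; have := deg_Gamma_neg_le x; rewrite mul_deg_Gamma_neg => sumB.
have sum0 : 0 <= \sum_(z | e x z) (f z + f x) ^+ 2 by apply: sumr_ge0 => z _; apply: sqr_ge0.
have [<-|uw] := eqVneq u w; first by rewrite subrr expr0n /=; lra.
have : (f u + f x) ^+ 2 + (f w + f x) ^+ 2 <= \sum_(z | e x z) (f z + f x) ^+ 2.
  rewrite (bigD1 u) //= (bigD1 w) /= ?exw ?(eq_sym w) ?uw // addrA lerDl.
  by apply: sumr_ge0 => z _; apply: sqr_ge0.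
have := sqr_ge0 (f u + f w + 2 * f x).
nra.
Qed.

Lemma nonbipartite_sqr_le x0 :
  (2 * f x0) ^+ 2 <= (diameter e).+1%:R ^+ 2 * (4 * dm * B).
Proof.
have [u [v [euv parity]]] := nonbipartite_parity_edge (dist e x0) nbip.
have B0 : 0 <= 4 * dm * B by apply: le_trans (edge_sqr_le euv); apply: sqr_ge0.
set h := Num.sqrt (4 * dm * B).
have le_h a : a ^+ 2 <= 4 * dm * B -> `|a| <= h by move=> a2; rewrite -sqrtr_sqr ler_sqrt.
have walk_bound_h := walk_bound (h := h) sym
  (fun x y exy => le_h _ (edge_sqr_le exy))
  (fun x u w exu exw => le_h _ (common_neighbour_sqr_le exu exw)).
have := walk_bound_h _ _ _ (walkS (walk_dist (conn x0 u)) euv).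
have := walk_bound_h _ _ _ (walk_dist (conn x0 v)).
have := uphalf_parity_le parity (dist_le_diameter e x0 u) (dist_le_diameter e x0 v).
rewrite -(signr_odd _ (dist e x0 v)) -(signr_odd _ (dist e x0 u).+1) /= parity.
rewrite -(ler_nat R) natrD.
move=> abD fvb fva; have h0 : 0 <= h := sqrtr_ge0 _.
have two_le : `|2 * f x0| <= (diameter e).+1%:R * h.
  apply: le_trans (ler_wpM2r h0 abD); rewrite mulrDl ler_norml.
  move: fva fvb; case: (odd _); rewrite /= ?expr1 ?expr0 ?mulN1r ?mul1r ?opprK !ler_norml.
    by move=> /andP[? ?] /andP[? ?]; apply/andP; split; lra.
  by move=> /andP[? ?] /andP[? ?]; apply/andP; split; lra.
have := ler_pM (normr_ge0 _) (normr_ge0 _) two_le two_le.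
by rewrite -!expr2 real_normK ?num_real // !exprMn /h sqr_sqrtr.
Qed.

End NonbipartiteBound.

Section NegativeSignature.
Variables (T : finType) (e : rel T) (R : realType) (f : T -> R) (mu : R).
Hypotheses (sym : symmetric e) (conn : connected_graph e) (nbip : ~ bipartite e).
Hypothesis eig_f : forall x, lapS e (@sigma_neg T R) f x = - mu * f x.

Local Notation Gf := (GammaS e (@sigma_neg T R) f f).

Lemma Gamma_neg_eig_le N M x1 :
  (1 < N)%E -> CD e (@sigma_neg T R) 0 N -> f x1 != 0 -> (forall y, f y ^+ 2 <= M) ->
  forall y, Gf y <= 2 * (1 + sqrtNratio N) * mu * M.
Proof.
move=> N1 cd fx1 fM y.
have dpos x := nonbipartite_deg_gt0 x conn nbip.
have dG0 x : 0 <= (deg e x)%:R * Gf x by rewrite mulr_ge0 ?Gamma_neg_ge0.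
have sumE := sum_deg_Gamma_eig eig_f sym.
have df0 : 0 < \sum_x (deg e x)%:R * f x ^+ 2.
  rewrite (bigD1 x1) //= ltr_pwDl //.
    by rewrite mulr_gt0 ?ltr0n // lt0r sqrf_eq0 fx1 sqr_ge0.
  by apply: sumr_ge0 => x _; rewrite mulr_ge0 ?sqr_ge0.
have mu0 : 0 <= mu by rewrite -(pmulr_lge0 _ df0) -sumE sumr_ge0.
have [mu_gt0|mu_le0] := ltrP 0 mu; first exact: Gamma_eig_le.
have {mu0 mu_le0} mu0 : mu = 0 by apply/eqP; rewrite eq_le mu_le0 mu0.
rewrite mu0 mul0r in sumE.
have /eqP := psumr_eq0P (fun x _ => dG0 x) sumE (i := y) isT.
by rewrite mulf_eq0 pnatr_eq0 eqn0Ngt dpos /= mu0 => /eqP ->; rewrite mulr0 mul0r.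
Qed.

Lemma nonbipartite_eig_gap N :
  (1 < N)%E -> CD e (@sigma_neg T R) 0 N -> (exists x, f x != 0) ->
  1 <= 2 * (1 + sqrtNratio N) * (max_deg e)%:R * (diameter e).+1%:R ^+ 2 * mu.
Proof.
move=> N1 cd [x1 fx1].
have [x0 _ fx0] := @arg_maxP _ _ T x1 xpredT (fun y => f y ^+ 2) isT.
set M := f x0 ^+ 2 in fx0; have fM y : f y ^+ 2 <= M := fx0 y isT.
have M_gt0 : 0 < M by apply: lt_le_trans (fM x1); rewrite lt0r sqrf_eq0 fx1 sqr_ge0.
have := nonbipartite_sqr_le sym conn nbip (Gamma_neg_eig_le N1 cd fx1 fM) x0.
rewrite exprMn -/M => le4M.
have M4 : 0 < 4 * M by rewrite mulr_gt0.
rewrite -(ler_pM2l M4) mulr1.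
by congr (_ <= _): le4M; ring.
Qed.

End NegativeSignature.

Theorem corollary3p14 (T : finType) (e : rel T) (R : realType) (N : \bar R) (lam : R) :
  simple_graph e -> connected_graph e -> ~ bipartite e ->
  (1 < N)%E ->
  CD e (@sigma_neg T R) 0 N ->
  largest_lap_eigenvalue e lam ->
  2 - lam >=
    (4 * (1 + sqrtNratio N))^-1 *
    ((max_deg e)%:R * (diameter e).+1%:R
       * (Num.ceil ((diameter e).+1%:R / 2 : R))%:~R)^-1.
Proof.
move=> [sym _] conn nbip N1 cd [[f [f_nz eig]] _].
have eig_neg x : lapS e (@sigma_neg T R) f x = - (2 - lam) * f x.
  by rewrite lapS_neg ?nonbipartite_deg_gt0 // eig; ring.
have := nonbipartite_eig_gap sym conn nbip eig_neg N1 cd f_nz.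
set s := sqrtNratio N; set dm := (max_deg e)%:R; set K := (diameter e).+1%:R.
set C := (Num.ceil (K / 2))%:~R; set c := 2 * (1 + s) * dm * K ^+ 2 => gap.
have [x _] := f_nz; have s0 := sqrtNratio_gt0 N1.
have dm0 : 0 < dm.
  by rewrite ltr0n (leq_trans (nonbipartite_deg_gt0 x conn nbip) (deg_le_max_deg e x)).
have K0 : 0 < K by rewrite ltr0n.
have C0 : 0 < C by rewrite (lt_le_trans _ (ceil_ge _)) ?divr_gt0.
have c0 : 0 < c by rewrite !mulr_gt0 ?exprn_gt0 ?addr_gt0.
have mu0 : 0 < 2 - lam by rewrite -(pmulr_rgt0 _ c0) (lt_le_trans ltr01).
have cC : c <= 4 * (1 + s) * (dm * K * C).
  have -> : 4 * (1 + s) * (dm * K * C) = 4 * (1 + s) * dm * K * C by ring.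
  have -> : c = 4 * (1 + s) * dm * K * (K / 2) by rewrite /c; field.
  by rewrite ler_pM2l ?ceil_ge // !mulr_gt0 ?addr_gt0.
rewrite -invfM -div1r ler_pdivrMr ?mulr_gt0 ?addr_gt0 //.
by apply: le_trans gap _; rewrite [leRHS]mulrC ler_pM2r.
Qed.
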